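(* Let $x\cdot y$ be a PA-structure on $(\mathfrak{g},\mathfrak{n})$, where $\mathfrak{g}$ and $\mathfrak{n}$ are $2$-step nilpotent. Then $x\circ y=\frac12(x\cdot y+y\cdot x)$ defines a CPA-structure on $\mathfrak{n}$ if and only if, for all $x,y\in V$, $$[\mathrm{ad}(x),\mathrm{Ad}(y)]=\mathrm{Ad}([x,y])$$ and $$L(\{x,y\})-L([x,y])=\tfrac12\bigl(\mathrm{ad}(\{x,y\})+[\mathrm{ad}(y),L(x)]+[L(y),\mathrm{ad}(x)]\bigr).$$
   Context: Let $K$ be a field of characteristic zero and $V$ a finite-dimensional vector space over $K$. Let $\mathfrak{g}=(V,[\,,])$ and $\mathfrak{n}=(V,\{\,,\})$ be two Lie algebra structures on $V$. A post-Lie algebra structure (PA-structure) on the pair $(\mathfrak{g},\mathfrak{n})$ is a $K$-bilinear product $x\cdot y$ on $V$ satisfying, for all $x,y,z\in V$: (i) $x\cdot y-y\cdot x=[x,y]-\{x,y\}$; (ii) $[x,y]\cdot z=x\cdot(y\cdot z)-y\cdot(x\cdot z)$; (iii) $x\cdot\{y,z\}=\{x\cdot y,z\}+\{y,x\cdot z\}$. Write $L(x)(y)=x\cdot y$, $\mathrm{ad}(x)(y)=[x,y]$, $\mathrm{Ad}(x)(y)=\{x,y\}$; brackets of operators are commutators in $\mathrm{End}(V)$. A commutative post-Lie algebra structure (CPA-structure) on the Lie algebra $\mathfrak{n}=(V,\{\,,\})$ is a bilinear product $x\circ y$ on $V$ with $x\circ y=y\circ x$, $\{x,y\}\circ z=x\circ(y\circ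 z)-y\circ(x\circ z)$, and $x\circ\{y,z\}=\{x\circ y,z\}+\{y,x\circ z\}$ for all $x,y,z$. A Lie algebra is called $2$-step nilpotent here if it is nilpotent of class at most $2$. *)

From HB Require Import structures.
From mathcomp Require Import all_boot all_order all_algebra.
Set Implicit Arguments.
Unset Strict Implicit.
Unset Printing Implicit Defensive.
Import GRing.Theory.
Local Open Scope ring_scope.

Definition bilinear_prod (K : fieldType) (V : vectType K) (m : V -> V -> V) :=
  (forall a x y z, m (a *: x + y) z = a *: m x z + m y z) /\
  (forall a x y z, m x (a *: y + z) = a *: m x y + m x z).

Definition is_lie (K : fieldType) (V : vectType K) (br : V -> V -> V) :=
  bilinear_prod br /\
  (forall x, br x x = 0) /\
  (forall x y z, br x (br y z) + br y (br z x) + br z (br x y) = 0).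

Definition two_step_nilpotent (K : fieldType) (V : vectType K) (br : V -> V -> V) :=
  forall x y z, br (br x y) z = 0.

(* PA-structure on the pair (g, n) = ((V,lb), (V,nb)). *)
Definition is_PA (K : fieldType) (V : vectType K)
  (lb nb : V -> V -> V) (p : V -> V -> V) :=
  bilinear_prod p /\
  (forall x y, p x y - p y x = lb x y - nb x y) /\
  (forall x y z, p (lb x y) z = p x (p y z) - p y (p x z)) /\
  (forall x y z, p x (nb y z) = nb (p x y) z + nb y (p x z)).

Definition is_CPA (K : fieldType) (V : vectType K)
  (nb : V -> V -> V) (c : V -> V -> V) :=
  bilinear_prod c /\
  (forall x y, c x y = c y x) /\
  (forall x y z, c (nb x y) z = c x (c y z) - c y (c x z)) /\
  (forall x y z, c x (nb y z) = nb (c x y) z + nb y (c x z)).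

Definition opcomm (K : fieldType) (V : vectType K) (f g : V -> V) : V -> V :=
  fun v => f (g v) - g (f v).

(* By axiom (i), [y.x = x.y - [x,y] + {x,y}], so [x o y = x.y + ({x,y} - [x,y])/2] is
   automatically bilinear and commutative.  Substituting this into the derivation axiom
   of a CPA-structure and using (iii) and 2-step nilpotency of n, its defect at (x,y,z)
   is exactly [-1/2] times the defect of [[ad x, Ad y] = Ad [x,y]] at z.  Likewise,
   using (ii), (iii) and 2-step nilpotency of g and n, the defect of the remaining CPA
   axiom is the defect of the second identity plus [1/4] times the antisymmetrisation
   in x, y of the first defect.  As 2 is invertible, the CPA axioms hold iff both
   defects vanish. *)
From mathcomp Require Import all_boot all_order all_algebra.
From mathcomp Require Import ring.
Import GRing.Theory.
Import VectorInternalTheory.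
Local Open Scope ring_scope.

Set Implicit Arguments.
Unset Strict Implicit.

Section Coordinates.
Variables (K : fieldType) (V : vectType K).

Local Notation v2r_at u i := (v2r u 0 i).

Lemma v2r_atP (u v : V) : (forall i, v2r_at u i = v2r_at v i) -> u = v.
Proof. by move=> eq_uv; apply: v2r_inj; apply/rowP => i; apply: eq_uv. Qed.

Lemma v2r_atD (u v : V) i : v2r_at (u + v) i = v2r_at u i + v2r_at v i.
Proof. by rewrite raddfD mxE. Qed.

Lemma v2r_atN (u : V) i : v2r_at (- u) i = - v2r_at u i.
Proof. by rewrite raddfN mxE. Qed.

Lemma v2r_atZ a (u : V) i : v2r_at (a *: u) i = a * v2r_at u i.
Proof. by rewrite linearZ mxE. Qed.

Lemma v2r_at0 i : v2r_at (0 : V) i = 0.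
Proof. by rewrite raddf0 mxE. Qed.

End Coordinates.

(* Reduces an identity between linear combinations of vectors to one between scalars,
   so that [ring] and [field] apply. *)
Ltac coordwise := apply: v2r_atP => ?; rewrite ?(v2r_atD, v2r_atN, v2r_atZ, v2r_at0).

Section Bilinear.
Variables (K : fieldType) (V : vectType K) (m : V -> V -> V).
Hypothesis m_bilin : bilinear_prod m.

Lemma bilinDl x y z : m (x + y) z = m x z + m y z.
Proof. by case: m_bilin => mDl _; have := mDl 1 x y z; rewrite !scale1r. Qed.

Lemma bilinDr x y z : m z (x + y) = m z x + m z y.
Proof. by case: m_bilin => _ mDr; have := mDr 1 z x y; rewrite !scale1r. Qed.

Lemma bilin0l z : m 0 z = 0.
Proof. by apply: (addrI (m 0 z)); rewrite -bilinDl !addr0. Qed.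

Lemma bilin0r z : m z 0 = 0.
Proof. by apply: (addrI (m z 0)); rewrite -bilinDr !addr0. Qed.

Lemma bilinZl a x z : m (a *: x) z = a *: m x z.
Proof. by case: m_bilin => mDl _; have := mDl a x 0 z; rewrite !addr0 bilin0l addr0. Qed.

Lemma bilinZr a x z : m z (a *: x) = a *: m z x.
Proof. by case: m_bilin => _ mDr; have := mDr a z x 0; rewrite !addr0 bilin0r addr0. Qed.

Lemma bilinNl x z : m (- x) z = - m x z.
Proof. by rewrite -scaleN1r bilinZl scaleN1r. Qed.

Lemma bilinNr x z : m z (- x) = - m z x.
Proof. by rewrite -scaleN1r bilinZr scaleN1r. Qed.

Lemma bilinBl x y z : m (x - y) z = m x z - m y z.
Proof. by rewrite bilinDl bilinNl. Qed.

Lemma bilinBr x y z : m z (x - y) = m z x - m z y.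
Proof. by rewrite bilinDr bilinNr. Qed.

End Bilinear.

Lemma lie_anticomm (K : fieldType) (V : vectType K) (br : V -> V -> V) :
  is_lie br -> forall x y, br y x = - br x y.
Proof.
case=> br_bilin [br_alt _] x y; have := br_alt (x + y).
rewrite (bilinDl br_bilin) !(bilinDr br_bilin) !br_alt add0r addr0 => /eqP.
by rewrite addr_eq0 => /eqP ->; rewrite opprK.
Qed.

Lemma two_step_nilpotent_r (K : fieldType) (V : vectType K) (br : V -> V -> V) :
  is_lie br -> two_step_nilpotent br -> forall x y z, br x (br y z) = 0.
Proof. by move=> br_lie br_nil x y z; rewrite (lie_anticomm br_lie) br_nil oppr0. Qed.

Definition sym_prod (K : fieldType) (V : vectType K) (p : V -> V -> V) x y :=
  2%:R^-1 *: (p x y + p y x).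

Lemma subr_eq0_iff (V : zmodType) (u v : V) : u - v = 0 <-> u = v.
Proof. by split=> [/subr0_eq | ->]; last exact: subrr. Qed.

Section PostLie.
Variables (K : fieldType) (V : vectType K) (lb nb p : V -> V -> V).
Hypothesis two_neq0 : (2%:R : K) != 0.
Hypothesis lb_lie : is_lie lb.
Hypothesis nb_lie : is_lie nb.
Hypothesis lb_nil : two_step_nilpotent lb.
Hypothesis nb_nil : two_step_nilpotent nb.
Hypothesis p_PA : is_PA lb nb p.

Local Notation c := (sym_prod p).
Local Notation h := (2%:R^-1 : K).

Definition ad_Ad_defect x y z :=
  opcomm (lb x) (nb y) z - nb (lb x y) z.

Definition L_bracket_defect x y z :=
  p (nb x y) z - p (lb x y) z -
  h *: (lb (nb x y) z + opcomm (lb y) (p x) z + opcomm (p y) (lb x) z).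

Let lb_bilin : bilinear_prod lb. Proof. by case: lb_lie. Qed.
Let nb_bilin : bilinear_prod nb. Proof. by case: nb_lie. Qed.
Let p_bilin : bilinear_prod p. Proof. by case: p_PA. Qed.
Let lb_nil_r := two_step_nilpotent_r lb_lie lb_nil.
Let nb_nil_r := two_step_nilpotent_r nb_lie nb_nil.

Ltac expand_bilinear := rewrite ?(
  bilinDl nb_bilin, bilinDr nb_bilin, bilinBl nb_bilin, bilinBr nb_bilin,
  bilinZl nb_bilin, bilinZr nb_bilin, bilinNl nb_bilin, bilinNr nb_bilin,
  bilin0l nb_bilin, bilin0r nb_bilin,
  bilinDl lb_bilin, bilinDr lb_bilin, bilinBl lb_bilin, bilinBr lb_bilin,
  bilinZl lb_bilin, bilinZr lb_bilin, bilinNl lb_bilin, bilinNr lb_bilin,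
  bilin0l lb_bilin, bilin0r lb_bilin,
  bilinDl p_bilin, bilinDr p_bilin, bilinBl p_bilin, bilinBr p_bilin,
  bilinZl p_bilin, bilinZr p_bilin, bilinNl p_bilin, bilinNr p_bilin,
  bilin0l p_bilin, bilin0r p_bilin).

Lemma PA_swap x y : p y x = p x y - lb x y + nb x y.
Proof.
case: p_PA => _ [p_comm _].
by rewrite -addrA [- _ + _]addrC -opprB -p_comm opprB addrC subrK.
Qed.

Lemma sym_prodE x y : c x y = p x y + h *: (nb x y - lb x y).
Proof. by rewrite /sym_prod (PA_swap x y); coordwise; field. Qed.

Lemma sym_prod_bilinear : bilinear_prod c.
Proof. by split=> a x y z; rewrite /sym_prod; expand_bilinear; coordwise; ring. Qed.

Lemma sym_prod_derivation_defect x y z :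
  c x (nb y z) - (nb (c x y) z + nb y (c x z)) = - h *: ad_Ad_defect x y z.
Proof.
rewrite /sym_prod /ad_Ad_defect /opcomm (PA_swap x y) (PA_swap x (nb y z)) (PA_swap x z).
case: p_PA => _ [_ [_ p_der]]; rewrite p_der.
expand_bilinear; rewrite ?nb_nil_r ?nb_nil.
by expand_bilinear; coordwise; field.
Qed.

Lemma sym_prod_lie_defect x y z :
  c (nb x y) z - (c x (c y z) - c y (c x z)) =
  L_bracket_defect x y z + h *: (h *: (ad_Ad_defect x y z - ad_Ad_defect y x z)).
Proof.
rewrite /L_bracket_defect /ad_Ad_defect /opcomm !sym_prodE.
case: p_PA => _ [_ [p_rep p_der]].
expand_bilinear; rewrite p_rep !p_der (PA_swap x y) (lie_anticomm lb_lie x y).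
expand_bilinear; rewrite ?nb_nil_r ?nb_nil ?lb_nil_r ?lb_nil.
by expand_bilinear; coordwise; field.
Qed.

Lemma sym_prod_derivationP :
  (forall x y z, c x (nb y z) = nb (c x y) z + nb y (c x z)) <->
  (forall x y z, ad_Ad_defect x y z = 0).
Proof.
have h_neq0 : h != 0 by rewrite invr_eq0.
split=> der x y z; apply/eqP.
- have := sym_prod_derivation_defect x y z.
  by rewrite der subrr => /esym/eqP; rewrite scaler_eq0 oppr_eq0 (negPf h_neq0).
- by rewrite -subr_eq0 sym_prod_derivation_defect der scaler0.
Qed.

Lemma sym_prod_CPA_iff : is_CPA nb c <->
  (forall x y z, ad_Ad_defect x y z = 0) /\ (forall x y z, L_bracket_defect x y z = 0).
Proof.
split.
- case=> _ [_ [c_rep c_der]].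
  have ad_Ad : forall x y z, ad_Ad_defect x y z = 0.
    by apply/sym_prod_derivationP=> x y z; rewrite c_der.
  split=> // x y z; have := sym_prod_lie_defect x y z.
  by rewrite c_rep subrr !ad_Ad subrr !scaler0 addr0 => <-.
- case=> ad_Ad L_bracket; split; first exact: sym_prod_bilinear.
  split; first by move=> x y; rewrite /sym_prod addrC.
  split; last exact/sym_prod_derivationP.
  move=> x y z; apply/eqP; rewrite -subr_eq0.
  by rewrite sym_prod_lie_defect L_bracket !ad_Ad subrr !scaler0 addr0.
Qed.

End PostLie.

Theorem proposition4p6 (K : fieldType) (V : vectType K)
  (lb nb p : V -> V -> V) :
  [pchar K] =i pred0 ->
  is_lie lb -> is_lie nb ->
  two_step_nilpotent lb -> two_step_nilpotent nb ->
  is_PA lb nb p ->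
  (is_CPA nb (fun x y => 2%:R^-1 *: (p x y + p y x)) <->
   (forall x y z, opcomm (lb x) (nb y) z = nb (lb x y) z) /\
   (forall x y z,
      p (nb x y) z - p (lb x y) z =
      2%:R^-1 *: (lb (nb x y) z + opcomm (lb y) (p x) z
                                 + opcomm (p y) (lb x) z))).
Proof.
move=> charK0 lb_lie nb_lie lb_nil nb_nil p_PA.
have two_neq0 : (2%:R : K) != 0 by move/pcharf0P: charK0 => ->.
apply: iff_trans (sym_prod_CPA_iff two_neq0 lb_lie nb_lie lb_nil nb_nil p_PA) _.
rewrite /ad_Ad_defect /L_bracket_defect.
by split=> -[ad_Ad L_bracket]; split=> x y z; apply/subr_eq0_iff;
  [exact: ad_Ad | exact: L_bracket | exact: ad_Ad | exact: L_bracket].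
Qed.
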